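(* Let $\mathbb T=\mathbb{R}/\mathbb{Z}$, let $\sigma_1,\sigma_2:\mathbb T\to\mathbb T$ be measurable maps with $\lambda_{\mathbb T}(\sigma_i^{-1}(\mathbb{Q}/\mathbb{Z}))=0$ for $i=1,2$, and let $\Gamma$ be the group generated by $h(x,y)=(x+\sigma_2(y),y)$ and $v(x,y)=(x,y+\sigma_1(x))$ acting on $\mathbb T^2$. Then the action of $\Gamma$ on $\mathbb T^2$ is ergodic with respect to the Lebesgue measure $\lambda_{\mathbb T^2}$.
   Context: $\lambda_{\mathbb T^d}$ denotes the normalized Lebesgue measure on $\mathbb T^d$; $h,v$ are invertible and preserve $\lambda_{\mathbb T^2}$. *)

(* The torus T = R/Z is modelled by the fundamental
   domain [0,1) with addition mod 1; T^2 by [0,1) x [0,1) inside R * R. *)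
From HB Require Import structures.
From mathcomp Require Import all_boot all_order all_algebra.
From mathcomp Require Import all_classical all_reals all_analysis.
Set Implicit Arguments. Unset Strict Implicit. Unset Printing Implicit Defensive.
Import Order.TTheory GRing.Theory Num.Theory.
Local Open Scope classical_set_scope.
Local Open Scope ring_scope.

Section Torus.
Variable R : realType.

Definition frac (x : R) : R := x - (Num.floor x)%:~R.

Definition T1 : set R := `[0, 1[%classic.
Definition T2 : set (R * R) := T1 `*` T1.

(* x mod 1 lies in Q/Z  iff  x is rational *)
Definition is_rational (x : R) : Prop := exists q : rat, x = ratr q.

Definition hmap (s2 : R -> R) (p : R * R) : R * R := (frac (p.1 + s2 p.2), p.2).
Definition hinv (s2 : R -> R) (p : R * R) : R * R := (frac (p.1 - s2 p.2), p.2).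
Definition vmap (s1 : R -> R) (p : R * R) : R * R := (p.1, frac (p.2 + s1 p.1)).
Definition vinv (s1 : R -> R) (p : R * R) : R * R := (p.1, frac (p.2 - s1 p.1)).

Inductive in_Gamma (s1 s2 : R -> R) : (R * R -> R * R) -> Prop :=
| Gamma_id : in_Gamma s1 s2 id
| Gamma_h g : in_Gamma s1 s2 g -> in_Gamma s1 s2 (hmap s2 \o g)
| Gamma_hinv g : in_Gamma s1 s2 g -> in_Gamma s1 s2 (hinv s2 \o g)
| Gamma_v g : in_Gamma s1 s2 g -> in_Gamma s1 s2 (vmap s1 \o g)
| Gamma_vinv g : in_Gamma s1 s2 g -> in_Gamma s1 s2 (vinv s1 \o g).

(* normalized Lebesgue measure on T^2 (T2 has product measure 1) *)
Definition lambda2 := ((@lebesgue_measure R) \x (@lebesgue_measure R))%E.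

Definition Gamma_ergodic (s1 s2 : R -> R) : Prop :=
  forall A : set (R * R), measurable A -> A `<=` T2 ->
    (forall g, in_Gamma s1 s2 g -> T2 `&` (g @^-1` A) = A) ->
    lambda2 A = 0%E \/ lambda2 A = 1%E.
End Torus.

(** Let A be a measurable invariant subset of T^2.  For almost every x the
   generator v translates the vertical fibre of A over x by the irrational
   number s1 x, so that fibre is invariant under an irrational rotation of T;
   likewise the horizontal fibres under h and s2.

   A measurable set F of reals with periods 1 and an irrational a has
   arbitrarily small periods (Dirichlet), so the measure of F in ]t, t + s] is
   independent of t and additive in s, hence equal to c s.  By uniqueness of
   measures F then has density c in every measurable set, in particular in F
   itself, so c = c^2: irrational rotations are ergodic and the fibres of A
   have measure 0 or 1.

   Finally let S be the set of y whose horizontal fibre is full.  Integrating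
   horizontal fibres gives lambda(A) = lambda(S) = lambda(A & (T x S)), while
   integrating vertical fibres gives lambda(A & (T x S)) = lambda(S) lambda(A),
   hence lambda(A) is 0 or 1. *)
From Pilot Require Import Defs.
From mathcomp Require Import all_boot all_order all_algebra.
From mathcomp Require Import all_classical all_reals all_analysis.
From mathcomp Require Import lra measurable_realfun.
Import Order.TTheory GRing.Theory Num.Theory.
Set Implicit Arguments. Unset Strict Implicit. Unset Printing Implicit Defensive.
Local Open Scope classical_set_scope.
Local Open Scope ring_scope.
(* Unqualified [frac] is the numerator/denominator pair of fraction.v. *)
Local Notation frac := Defs.frac.

Lemma mule_idem_eq01 (R : realType) (x : \bar R) : x \is a fin_num ->
  x = (x * x)%E -> x = 0%E \/ x = 1%E.
Proof.
move=> /fineK <-; rewrite -EFinM => -[xx].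
have [->|x0] := eqVneq (fine x) 0; [by left|right; congr (_%:E)].
by apply: (mulIf x0); rewrite mul1r -xx.
Qed.
Section FractionalPart.
Variable R : realType.
Implicit Types x y : R.

Lemma frac_ge0 x : 0 <= frac x.
Proof. by rewrite /frac subr_ge0 floor_le. Qed.

Lemma frac_lt1 x : frac x < 1.
Proof. have := floorD1_gt x; rewrite /frac intrD; lra. Qed.

Lemma T1_frac x : T1 (frac x).
Proof. by rewrite /T1 /= in_itv /= frac_ge0 frac_lt1. Qed.

Lemma frac_T1 x : T1 x -> frac x = x.
Proof.
rewrite /T1 /= in_itv /= => x01; rewrite /frac (_ : Num.floor x = 0) ?subr0 //.
by apply/eqP; rewrite floor_eq add0r.
Qed.

Lemma fracDz x (z : int) : frac (x + z%:~R) = frac x.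
Proof. rewrite /frac floorDrz ?intr_int // intrKfloor intrD; lra. Qed.

Lemma frac_fracD x y : frac (frac x + y) = frac (x + y).
Proof. by rewrite {2}/frac addrAC -intrN fracDz. Qed.

End FractionalPart.

Section Dirichlet.
Variable R : realType.

Lemma truncn_eq_dist_lt1 (x y : R) : 0 <= x -> 0 <= y ->
  Num.truncn x = Num.truncn y -> `|x - y| < 1.
Proof.
move=> x0 y0 xy; have := truncn_itv x0; have := truncn_itv y0; rewrite -xy.
rewrite -natr1 ltr_norml => /andP[? ?] /andP[? ?]; apply/andP; split; lra.
Qed.

Lemma frac_natmul_close (a e : R) : 0 < e ->
  exists i j : nat, i != j /\ `|frac (i%:R * a) - frac (j%:R * a)| < e.
Proof.
move=> e0; set n := Num.truncn e^-1; pose N : R := n.+1%:R.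
have N0 : 0 < N by rewrite ltr0n.
have Ne : N^-1 < e.
  by rewrite -(invrK e) ltf_pV2 ?posrE ?invr_gt0 // truncnS_gt.
pose box i := Num.truncn (N * frac (i%:R * a)).
have box_lt i : (box i < n.+1)%N.
  rewrite truncn_lt_nat ?mulr_ge0 ?frac_ge0 ?ltW //.
  by rewrite -[ltRHS]mulr1 ltr_pM2l // frac_lt1.
pose ibox (i : 'I_n.+2) : 'I_n.+1 := inord (box i).
have [/injectiveP ibox_inj|] := boolP (injectiveb ibox).
  by have := leq_card ibox ibox_inj; rewrite !card_ord ltnn.
move=> /injectivePn[i [j ij /(congr1 val)]]; rewrite /= !inordK // => box_ij.
exists i, j; split; first exact: ij.
have := truncn_eq_dist_lt1 (mulr_ge0 (ltW N0) (frac_ge0 _))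
  (mulr_ge0 (ltW N0) (frac_ge0 _)) box_ij.
rewrite -mulrBr normrM gtr0_norm // -ltr_pdivlMl // mulr1 => close.
exact: lt_trans Ne.
Qed.

Lemma irrational_intr_lincomb_neq0 (a : R) (m k : int) : ~ is_rational a ->
  m != 0 -> m%:~R * a + k%:~R != 0.
Proof.
move=> a_irr m0; apply/eqP => mak0; apply: a_irr; exists ((- k)%:Q / m%:Q).
rewrite fmorph_div /= !ratr_int intrN.
have -> : - k%:~R = m%:~R * a :> R by lra.
by rewrite mulrC mulKf // intr_eq0.
Qed.

Lemma dirichlet_approx (a e : R) : ~ is_rational a -> 0 < e ->
  exists m k : int, 0 < m%:~R * a + k%:~R < e.
Proof.
move=> a_irr e0; have [i [j [ij close]]] := frac_natmul_close a e0.
pose m : int := i%:Z - j%:Z.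
pose k : int := Num.floor (j%:R * a) - Num.floor (i%:R * a).
have dE : frac (i%:R * a) - frac (j%:R * a) = m%:~R * a + k%:~R.
  by rewrite /Defs.frac /m /k !intrD !intrN /= -!pmulrn; lra.
rewrite {}dE in close.
have : m%:~R * a + k%:~R != 0.
  by apply: irrational_intr_lincomb_neq0; rewrite // subr_eq0 eqz_nat.
rewrite neq_lt => /orP[mak_lt0|mak_gt0].
  exists (- m), (- k); rewrite !intrN mulNr -opprD oppr_gt0 mak_lt0 /=.
  by rewrite ltr0_norm in close.
by exists m, k; rewrite mak_gt0 /= -[_ + _]gtr0_norm.
Qed.

End Dirichlet.

Section Periods.
Variable R : realType.
Implicit Types (F : set R) (d : R).

Definition period F d := forall x, F x <-> F (x + d).

Lemma periodD F d d' : period F d -> period F d' -> period F (d + d').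
Proof. by move=> Fd Fd' x; rewrite addrA -Fd'. Qed.

Lemma periodN F d : period F d -> period F (- d).
Proof. by move=> Fd x; rewrite (Fd (x - d)) subrK. Qed.

Lemma periodMz F d (z : int) : period F d -> period F (z%:~R * d).
Proof.
move=> Fd; have Fnd (n : nat) : period F (n%:R * d).
  elim: n => [|n IHn]; first by rewrite mul0r => x; rewrite addr0.
  by rewrite -natr1 mulrDl mul1r; exact: periodD.
by case: z => n; rewrite ?NegzE ?intrN ?mulNr; [|apply: periodN]; rewrite -pmulrn.
Qed.

Lemma small_periods F a : period F 1 -> period F a -> ~ is_rational a ->
  forall e, 0 < e -> exists2 d, period F d & 0 < d < e.
Proof.
move=> F1 Fa a_irr e e0; have [m [k mak]] := dirichlet_approx a_irr e0.
exists (m%:~R * a + k%:~R) => //.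
by apply: periodD; [exact: periodMz|rewrite -[k%:~R]mulr1; exact: periodMz].
Qed.

End Periods.

Section LebesgueMeasureFacts.
Variable R : realType.
Local Notation mu := (@lebesgue_measure R).

Lemma measurable_shift (c : R) (A : set R) : measurable A ->
  measurable ((fun x => x + c) @^-1` A).
Proof.
move=> mA; rewrite -[X in measurable X]setTI.
by apply: measurable_funD => //; exact: measurable_cst.
Qed.

Lemma lebesgue_measure_itvoc_add (t s : R) : 0 <= s -> mu `]t, t + s] = s%:E.
Proof.
move=> s0; rewrite lebesgue_measure_itv /= lte_fin.
case: ifPn => [_|]; first by rewrite -EFinB addrC addKr.
by rewrite -leNgt => st; congr (_%:E); lra.
Qed.

Lemma lebesgue_measure_shift (c : R) (A : set R) : measurable A ->
  mu ((fun x => x + c) @^-1` A) = mu A.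
Proof.
move=> mA; pose shift : measurableTypeR R -> measurableTypeR R := +%R^~ c.
have mshift : measurable_fun [set: measurableTypeR R] shift.
  by apply: measurable_funD => //; exact: measurable_cst.
(* The pushforward is a measure only given [mshift], so its instance has to be
   named explicitly. *)
pose nu := measure_function_pushforward__canonical__measure_function_Measure
  mu mshift.
symmetry; apply: (@lebesgue_measure_unique R nu) => // _ [[a b] _ <-].
have -> : nu `]a, b]%classic = mu `]a - c, b - c]%classic.
  congr (mu _); apply/seteqP; split => x; rewrite /= /shift !in_itv /=;
    move=> /andP[? ?]; apply/andP; split; lra.
by rewrite !lebesgue_measure_itv /= !lte_fin ltrD2r -!EFinB opprB addrA subrK.
Qed.

Lemma lebesgue_measure_T1 : mu (@T1 R) = 1%E.
Proof. by rewrite lebesgue_measure_itv /= lte_fin ltr01 sube0. Qed.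

Lemma setI_itvoc (a b a' b' : R) :
  `]a, b] `&` `]a', b'] = `]Num.max a a', Num.min b b']%classic.
Proof.
by apply/seteqP; split => x; rewrite /= !in_itv /= gt_max le_min;
  [move=> [/andP[-> ->] /andP[-> ->]] | move=> /andP[/andP[-> ->] /andP[-> ->]]].
Qed.

Lemma lebesgue_measure_le_setU (A B C : set R) :
  measurable A -> measurable B -> measurable C -> A `<=` B `|` C ->
  (mu A <= mu B + mu C)%E.
Proof.
move=> mA mB mC ABC; apply: (@le_trans _ _ (mu (B `|` C))).
  by rewrite le_measure ?inE //; exact: measurableU.
exact: measureU2.
Qed.

Lemma lebesgue_measureU1 (A : set R) (x : R) : measurable A ->
  mu (A `|` [set x]) = mu A.
Proof.
move=> mA; apply/le_anti/andP; split; last first.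
  by rewrite le_measure ?inE //; apply: measurableU.
rewrite -[leRHS]adde0 -(lebesgue_measure_set1 x).
by apply: lebesgue_measure_le_setU => //; apply: measurableU.
Qed.

End LebesgueMeasureFacts.

Section AdditiveFunctions.
Variable R : realType.

Lemma bounded_multiples_eq0 (y c : R) :
  (forall n : nat, `|y| * n.+1%:R <= c) -> y = 0.
Proof.
move=> yc; apply/eqP; apply: contraT => y0.
have y_gt0 : 0 < `|y| by rewrite normr_gt0.
have := truncnS_gt (c / `|y|); rewrite ltr_pdivrMr // mulrC.
by have := yc (Num.truncn (c / `|y|)); rewrite leNgt => /negPf ->.
Qed.

Section AdditiveGe0.
Variable f : R -> R.
Hypothesis fD : forall a b, 0 <= a -> 0 <= b -> f (a + b) = f a + f b.
Hypothesis f_ge0 : forall a, 0 <= a -> 0 <= f a.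

Lemma additive_ge0_natmul (s : R) (n : nat) : 0 <= s -> f (n%:R * s) = n%:R * f s.
Proof.
move=> s0; have f0 : f 0 = 0 by have := fD (lexx 0) (lexx 0); rewrite addr0; lra.
elim: n => [|n IHn]; first by rewrite !mul0r.
by rewrite -natr1 !mulrDl !mul1r fD ?IHn // mulr_ge0.
Qed.

Lemma additive_ge0_homo : {in Num.nneg &, {homo f : a b / a <= b}}.
Proof.
move=> a b; rewrite !nnegrE => a0 _ ab; have -> : b = a + (b - a) by lra.
by rewrite fD ?subr_ge0 // lerDl f_ge0 ?subr_ge0.
Qed.

Lemma additive_ge0_linear (s : R) : 0 <= s -> f s = f 1 * s.
Proof.
move=> s0; apply/eqP; rewrite -subr_eq0; apply/eqP.
apply: (@bounded_multiples_eq0 _ (f 1)) => n.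
pose N : R := n.+1%:R; have N0 : 0 < N by rewrite ltr0n.
have invN0 : 0 <= N^-1 by rewrite invr_ge0 ltW.
have f_invN : f N^-1 = f 1 / N.
  have := additive_ge0_natmul n.+1 invN0.
  by rewrite -/N mulfV ?gt_eqF // => ->; rewrite mulrC mulKf ?gt_eqF.
have f_frac k : f (k%:R / N) = k%:R * (f 1 / N).
  by rewrite additive_ge0_natmul // f_invN.
set k := Num.truncn (N * s).
have /andP[kNs Nsk] := truncn_itv (mulr_ge0 (ltW N0) s0).
have lo : f (k%:R / N) <= f s.
  apply: additive_ge0_homo; rewrite ?nnegrE ?divr_ge0 //.
  by rewrite ler_pdivrMr // mulrC.
have hi : f s <= f (k.+1%:R / N).
  apply: additive_ge0_homo; rewrite ?nnegrE ?divr_ge0 //.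
  by rewrite ler_pdivlMr // mulrC ltW.
have c0 : 0 <= f 1 := f_ge0 ler01.
have lo' : k%:R * (f 1 / N) <= f 1 * s.
  by rewrite mulrCA ler_wpM2l // ler_pdivrMr // mulrC.
have hi' : f 1 * s <= k.+1%:R * (f 1 / N).
  by rewrite mulrCA ler_wpM2l // ler_pdivlMr // mulrC ltW.
rewrite !f_frac in lo hi; rewrite -natr1 mulrDl mul1r in hi hi'.
rewrite -ler_pdivlMr // -/N ler_norml.
move: lo hi lo' hi'; set u := k%:R * _; set v := f 1 / N.
by move=> *; apply/andP; split; lra.
Qed.

End AdditiveGe0.
End AdditiveFunctions.

Section SmallPeriodSet.
Variable R : realType.
Local Notation mu := (@lebesgue_measure R).
Variable F : set R.
Hypothesis mF : measurable F.
Hypothesis F_small_periods :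
  forall e : R, 0 < e -> exists2 d, period F d & 0 < d < e.

Let mFI a b : measurable (F `&` `]a, b]) := measurableI _ _ mF (measurable_itv _).

Let W t s := mu (F `&` `]t, t + s]).

Let W_period d t s : period F d -> W (t + d) s = W t s.
Proof.
move=> Fd; rewrite /W -(lebesgue_measure_shift d (mFI _ _)); congr (mu _).
apply/seteqP; split => x /=; rewrite !in_itv /= -(Fd x) => -[Fx /andP[? ?]];
  by split => //; apply/andP; split; lra.
Qed.

Let W_le t s : 0 <= s -> (W t s <= s%:E)%E.
Proof.
by move=> s0; rewrite /W -(lebesgue_measure_itvoc_add t s0); exact: measureIr.
Qed.

Let W_fin_num t s : 0 <= s -> W t s \is a fin_num.
Proof. by move=> s0; rewrite ge0_fin_numE // (le_lt_trans (W_le t s0)) ?ltry. Qed.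

Let W_shiftr t s h : 0 <= h -> (W (t + h) s <= W t s + h%:E)%E.
Proof.
move=> h0; rewrite /W -(lebesgue_measure_itvoc_add (t + s) h0).
apply: lebesgue_measure_le_setU (mFI _ _) (mFI _ _) (measurable_itv _) _.
move=> x [Fx] /=; rewrite !in_itv /= => /andP[? ?].
have [?|?] := leP x (t + s); [left; split; first exact: Fx|right];
  by apply/andP; split; lra.
Qed.

Let W_const t t' s : W t' s = W t s.
Proof.
wlog suff W_le_shift : t t' / (W t' s <= W t s)%E.
  by apply/le_anti; rewrite !W_le_shift.
apply/lee_addgt0Pr => e e0; have [d Fd /andP[d0 de]] := F_small_periods e0.
set n := Num.floor ((t' - t) / d).
have /andP[] := floor_itv ((t' - t) / d).
rewrite -/n ler_pdivlMr // ltr_pdivrMr // intrD mulrDl mul1r => nd_le nd_gt.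
have -> : t' = t + n%:~R * d + (t' - t - n%:~R * d) by lra.
apply: le_trans (W_shiftr _ _ _) _; first lra.
by rewrite (W_period _ _ (periodMz n Fd)) leeD // lee_fin; lra.
Qed.

Let W_add x y : 0 <= x -> 0 <= y -> W 0 (x + y) = (W 0 x + W 0 y)%E.
Proof.
move=> x0 y0; rewrite (W_const x 0 y) /W -measureU; [|exact: mFI..|].
  congr (mu _); apply/seteqP; split => z /=; rewrite !in_itv /= !add0r.
    move=> [Fz /andP[? ?]].
    by have [?|?] := leP z x; [left|right]; split => //; apply/andP; split; lra.
  by move=> [] [Fz /andP[? ?]]; split => //; apply/andP; split; lra.
apply/seteqP; split => z //=; rewrite !in_itv /= add0r.
by move=> [[_ /andP[? ?]] [_ /andP[? ?]]]; lra.
Qed.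

Let c := fine (W 0 1).

Let c_ge0 : 0 <= c.
Proof. exact: fine_ge0. Qed.

Let W_lin t s : 0 <= s -> W t s = (c * s)%:E.
Proof.
move=> s0; rewrite (W_const 0) -[LHS]fineK ?W_fin_num //; congr (_%:E).
apply: (additive_ge0_linear (f := fun s => fine (W 0 s))) s0 => [a b a0 b0|a a0].
  by rewrite W_add // fineD ?W_fin_num.
exact: fine_ge0.
Qed.

Let density a b : mu (F `&` `]a, b]) = (c%:E * mu `]a, b])%E.
Proof.
have [ab|ba] := ltP a b.
  have -> : b = a + (b - a) by rewrite addrC subrK.
  have ba0 : 0 <= b - a by rewrite subr_ge0 ltW.
  by rewrite lebesgue_measure_itvoc_add // -EFinM -(W_lin a ba0).
by rewrite set_itv_ge ?setI0 ?measure0 ?mule0 // bnd_simp -leNgt.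
Qed.

Let FI_c : mu (F `&` `]0, 1]) = c%:E.
Proof. by rewrite density lebesgue_measure_itv /= lte_fin ltr01 sube0 mule1. Qed.

Let restricted_density A : measurable A ->
  mu (A `&` (F `&` `]0, 1])) = (c%:E * mu (A `&` `]0%R, 1%R]))%E.
Proof.
pose muF := mrestr mu (mFI 0 1).
pose cmu := mscale (NngNum c_ge0) (mrestr mu (measurable_itv `]0, 1])).
move=> mA; apply: (@measure_unique _ R (measurableTypeR R) (@ocitv R)
  (fun k : nat => `](- k%:R), k%:R]%classic) erefl (@ocitvI R) _
  (bigcup_itvT _ _) muF cmu _ _ A mA).
- by move=> k; exact: is_ocitv.
- move=> _ [[a b] _ <-]; rewrite /muF /cmu /= /mrestr /mscale /=.
  by rewrite setICA setI_itvoc density /mrestr setI_itvoc.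
- move=> k; rewrite /muF /= /mrestr.
  apply: (@le_lt_trans _ _ (mu (F `&` `]0, 1]))); last by rewrite FI_c ltry.
  by rewrite le_measure ?inE //; apply: measurableI => //; exact: mFI.
Qed.

Lemma small_periods_measure01 :
  mu (F `&` `]0, 1]) = 0%E \/ mu (F `&` `]0, 1]) = 1%E.
Proof.
rewrite FI_c; apply: mule_idem_eq01 => //.
by have := restricted_density mF; rewrite setIA setIid FI_c.
Qed.

End SmallPeriodSet.

Section IrrationalRotation.
Variable R : realType.
Local Notation mu := (@lebesgue_measure R).

Lemma frac_preimageE (E : set R) : E `<=` @T1 R ->
  [set x | E (frac x)] =
  \bigcup_n ((fun x => x - n%:R) @^-1` E `|` (fun x => x + n%:R) @^-1` E).
Proof.
move=> ET1; have E_frac x (z : int) : E (x - z%:~R) -> E (frac x).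
  move=> Exz; rewrite -[in frac x](subrK z%:~R x) fracDz frac_T1 //.
  exact: ET1.
apply/seteqP; split => x /=.
  rewrite {1}/Defs.frac; case: (Num.floor x) => n Exn.
    by exists n => //; left; rewrite -pmulrn in Exn.
  by exists n.+1 => //; right; rewrite NegzE intrN opprK -pmulrn in Exn.
move=> [n _ [Exn|Exn]]; first by apply: (E_frac x n); rewrite -pmulrn.
by apply: (E_frac x (- n%:Z)); rewrite intrN opprK -pmulrn.
Qed.

Lemma rotation_invariant_measure01 (E : set R) (a : R) :
  measurable E -> E `<=` @T1 R -> ~ is_rational a ->
  (forall x, T1 x -> E x <-> E (frac (x + a))) -> mu E = 0%E \/ mu E = 1%E.
Proof.
move=> mE ET1 a_irr E_inv; pose F := [set x | E (frac x)].
have mF : measurable F.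
  rewrite /F frac_preimageE //; apply: bigcupT_measurable => n.
  by apply: measurableU; apply: measurable_shift.
have F1 : period F 1 by move=> x; rewrite /F /= -[1]/(1%:~R) fracDz.
have Fa : period F a.
  by move=> x; rewrite /F /= -frac_fracD; apply: E_inv; exact: T1_frac.
have mFI : measurable (F `&` `]0, 1]) by apply: measurableI.
suff -> : mu E = mu (F `&` `]0, 1]).
  exact: small_periods_measure01 mF (small_periods F1 Fa a_irr).
apply/le_anti/andP; split.
  rewrite -(lebesgue_measureU1 0 mFI) le_measure ?inE //.
    by apply: measurableU => //; exact: measurable_set1.
  move=> x Ex; have /[dup] x01 := ET1 _ Ex.
  rewrite /T1 /= in_itv /= => /andP[x0 x1].
  have [->|x_neq0] := eqVneq x 0; [by right|left].
  split; first by rewrite /F /= frac_T1.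
  by rewrite /= in_itv /= lt_neqAle eq_sym x_neq0 x0 ltW.
rewrite -(lebesgue_measureU1 1 mE) le_measure ?inE //.
  by apply: measurableU => //; exact: measurable_set1.
move=> x [Fx]; rewrite /= in_itv /= => /andP[x0 x1].
have [->|x_neq1] := eqVneq x 1; [by right|left].
by move: Fx; rewrite /F /= frac_T1 // /T1 /= in_itv /= ltW //= lt_neqAle x_neq1.
Qed.

End IrrationalRotation.

Lemma measure_setI_full d (T : measurableType d) (R : realType)
    (mu : {measure set T -> \bar R}) (D X Y : set T) :
  measurable D -> measurable X -> measurable Y -> (mu D < +oo)%E ->
  X `<=` D -> Y `<=` D -> mu X = mu D -> mu (X `&` Y) = mu Y.
Proof.
move=> mD mX mY Doo XD YD XDE.
have : mu (D `\` X) = (mu D - mu (D `&` X))%E := measureD mD mX Doo.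
rewrite (setIidr XD) XDE subee ?ge0_fin_numE // => DX0.
have YX0 : mu (Y `\` X) = 0%E.
  apply: (subset_measure0 (measurableD mY mX) (measurableD mD mX) _ DX0).
  by move=> z [/YD]; split.
have : mu Y = (mu (Y `\` X) + mu (Y `&` X))%E := measureDI mu mY mX.
by rewrite YX0 add0e setIC.
Qed.

Section AlmostEverywhere.
Context d (T : semiRingOfSetsType d) (R : realFieldType).
Variable mu : set T -> \bar R.

Lemma ae_outside_null (N : set T) (P : T -> Prop) : measurable N ->
  mu N = 0%E -> (forall x, ~ N x -> P x) -> {ae mu, forall x, P x}.
Proof.
move=> mN N0 NP; exists N; split => // x /= nPx.
by apply: contrapT => nNx; exact: nPx (NP x nNx).
Qed.

Lemma ae_mono (P Q : T -> Prop) : (forall x, P x -> Q x) ->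
  {ae mu, forall x, P x} -> {ae mu, forall x, Q x}.
Proof.
by move=> PQ [N [mN N0 nPN]]; exists N; split => // x nQx; apply: nPN => /PQ.
Qed.

End AlmostEverywhere.

Section FibreCriterion.
Variable R : realType.
Local Notation mu := (@lebesgue_measure R).

Lemma lambda2_ysectionE (B : set (R * R)) : measurable B ->
  lambda2 B = (\int[mu]_y mu (ysection B y))%E.
Proof.
move=> mB; rewrite /lambda2.
rewrite (@product_measure_unique _ _ _ _ _ mu mu (mu \x^ mu)%E) //.
by move=> X Y mX mY; exact: product_measure2E.
Qed.

Variable A : set (R * R).
Hypotheses (mA : measurable A) (AT2 : A `<=` @T2 R).
Hypothesis xsection01 :
  {ae mu, forall x, mu (xsection A x) = 0%E \/ mu (xsection A x) = 1%E}.
Hypothesis ysection01 :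
  {ae mu, forall y, mu (ysection A y) = 0%E \/ mu (ysection A y) = 1%E}.

Let S := [set y | mu (ysection A y) = 1%E].

Let mS : measurable S.
Proof.
rewrite -[X in measurable X]setTI.
exact: (measurable_fun_ysection mu mA) measurableT _ (emeasurable_set1 _).
Qed.

Let xsection_T1 x : xsection A x `<=` @T1 R.
Proof. by move=> y /xsectionP /AT2 []. Qed.

Let S_T1 : S `<=` @T1 R.
Proof.
move=> y Sy; apply: contrapT => y_notin; move: Sy; rewrite /S /=.
have -> : ysection A y = set0.
  by apply/seteqP; split => // x /ysectionP /AT2 [].
by rewrite measure0 => -[] /eqP; rewrite eq_sym oner_eq0.
Qed.

Let mAS : measurable (A `&` snd @^-1` S).
Proof.
apply: measurableI => //; rewrite -[X in measurable X]setTI.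
exact: measurable_snd.
Qed.

Let integral_indic_S : (\int[mu]_y (\1_S y)%:E = mu S)%E.
Proof. by rewrite integral_indic // setIT. Qed.

Let ysection_measure_indic y :
  mu (ysection A y) = 0%E \/ mu (ysection A y) = 1%E ->
  mu (ysection A y) = (\1_S y)%:E.
Proof.
rewrite indicE; have [/set_mem Sy _|/negP Sy] := boolP (y \in S); first exact: Sy.
by case=> // /mem_set.
Qed.

Let lambda2_A : lambda2 A = mu S.
Proof.
rewrite lambda2_ysectionE // -integral_indic_S; apply: ae_eq_integral => //.
- exact: measurable_fun_ysection.
- by apply/measurable_EFinP; exact: measurable_indic.
- by apply: ae_mono ysection01 => y /ysection_measure_indic.
Qed.

Let lambda2_AS : lambda2 (A `&` snd @^-1` S) = mu S.
Proof.
rewrite lambda2_ysectionE // -integral_indic_S; apply: eq_integral => y _.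
rewrite ysectionI indicE; have [Sy|Sy] := boolP (y \in S).
  rewrite (_ : ysection (snd @^-1` S) y = setT) ?setIT; first exact: set_mem.
  by apply/seteqP; split => // x _; apply/ysectionP; exact: set_mem.
rewrite (_ : ysection (snd @^-1` S) y = set0) ?setI0 ?measure0 //.
by apply/seteqP; split => // x /ysectionP /= /mem_set; rewrite (negbTE Sy).
Qed.

Let lambda2_AS_mul : lambda2 (A `&` snd @^-1` S) = (mu S * lambda2 A)%E.
Proof.
rewrite /lambda2 /product_measure1 /= -ge0_integralZl //; last first.
  exact: measurable_fun_xsection.
apply: ae_eq_integral => //.
- exact: measurable_fun_xsection.
- by apply: measurable_funeM; exact: measurable_fun_xsection.
apply: ae_mono xsection01 => x x01 _.
rewrite /= xsectionI xsection_preimage_snd.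
have mAx : measurable (xsection A x) by exact: measurable_xsection.
case: x01 => x01; rewrite x01.
  rewrite mule0; apply: (subset_measure0 (mu := mu) (measurableI _ _ mAx mS) mAx).
  - exact: subIsetl.
  - exact: x01.
rewrite mule1; apply: (measure_setI_full (mu := mu) (D := @T1 R)) => //.
- exact: measurable_itv.
- by rewrite /= lebesgue_measure_T1 ltry.
- by rewrite /= x01 lebesgue_measure_T1.
Qed.

Lemma fibres01_lambda2_01 : lambda2 A = 0%E \/ lambda2 A = 1%E.
Proof.
apply: mule_idem_eq01.
  rewrite lambda2_A ge0_fin_numE //; apply: (@le_lt_trans _ _ (mu (@T1 R))).
    by rewrite le_measure ?inE //; exact: measurable_itv.
  by rewrite lebesgue_measure_T1 ltry.
by rewrite {1}lambda2_A -lambda2_AS lambda2_AS_mul lambda2_A.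
Qed.

End FibreCriterion.

Lemma measurable_rational_preimage (R : realType) (D : set R) (s : R -> R) :
  measurable D -> measurable_fun D s ->
  measurable (D `&` [set x | is_rational (s x)]).
Proof.
move=> mD ms; have -> : [set x | is_rational (s x)] = s @^-1` range (@ratr R).
  by apply/seteqP; split => x /= [q]; [move=> ->; exists q|move=> _ <-; exists q].
apply: ms => //; apply: countable_measurable; first exact: measurable_set1.
exact: sub_countable (card_image_le _ _) (countableP _).
Qed.

Section InvariantSet.
Variable R : realType.
Local Notation mu := (@lebesgue_measure R).
Variables (s1 s2 : R -> R) (A : set (R * R)).
Hypotheses (mA : measurable A) (AT2 : A `<=` @T2 R).
Hypothesis A_inv : forall g, in_Gamma s1 s2 g -> @T2 R `&` g @^-1` A = A.

Let A_inv_at g p : in_Gamma s1 s2 g -> T2 p -> A p <-> A (g p).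
Proof.
by move=> /A_inv /seteqP[gA_A A_gA] Tp; split => [/A_gA []|Agp]; last exact: gA_A.
Qed.

Lemma xsection_invariant01 x : ~ (T1 x /\ is_rational (s1 x)) ->
  mu (xsection A x) = 0%E \/ mu (xsection A x) = 1%E.
Proof.
move=> x_good; have [x_T1|x_T1] := pselect (T1 x).
  apply: (rotation_invariant_measure01 (a := s1 x)).
  - exact: measurable_xsection.
  - by move=> y /xsectionP /AT2 [].
  - by move=> s1_rat; apply: x_good.
  move=> y y_T1; rewrite !xsectionP.
  exact: (A_inv_at (p := (x, y)) (Gamma_v (Gamma_id s1 s2))).
left; rewrite (_ : xsection A x = set0) ?measure0 //.
by apply/seteqP; split => // y /xsectionP /AT2 [].
Qed.

Lemma ysection_invariant01 y : ~ (T1 y /\ is_rational (s2 y)) ->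
  mu (ysection A y) = 0%E \/ mu (ysection A y) = 1%E.
Proof.
move=> y_good; have [y_T1|y_T1] := pselect (T1 y).
  apply: (rotation_invariant_measure01 (a := s2 y)).
  - exact: measurable_ysection.
  - by move=> x /ysectionP /AT2 [].
  - by move=> s2_rat; apply: y_good.
  move=> x x_T1; rewrite !ysectionP.
  exact: (A_inv_at (p := (x, y)) (Gamma_h (Gamma_id s1 s2))).
left; rewrite (_ : ysection A y = set0) ?measure0 //.
by apply/seteqP; split => // x /ysectionP /AT2 [].
Qed.

End InvariantSet.

Theorem corollary7 (R : realType) (s1 s2 : R -> R) :
  measurable_fun (@T1 R) s1 -> measurable_fun (@T1 R) s2 ->
  (@lebesgue_measure R) (@T1 R `&` [set x | is_rational (s1 x)]) = 0%E ->
  (@lebesgue_measure R) (@T1 R `&` [set x | is_rational (s2 x)]) = 0%E ->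
  Gamma_ergodic s1 s2.
Proof.
move=> ms1 ms2 s1_null s2_null A mA AT2 A_inv.
have mT1 : measurable (@T1 R) by exact: measurable_itv.
apply: fibres01_lambda2_01 => //.
- apply: ae_outside_null (measurable_rational_preimage mT1 ms1) s1_null _.
  by move=> x; apply: (xsection_invariant01 mA AT2 A_inv).
- apply: ae_outside_null (measurable_rational_preimage mT1 ms2) s2_null _.
  by move=> y; apply: (ysection_invariant01 mA AT2 A_inv).
Qed.
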